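(* Let $n$ be a positive integer, let $\hat y\in\mathbb{R}^n$ satisfy $\mathrm{rank}(\mathcal{H}_2(\hat y))=2$, and let $y^*$ be an optimal solution of $$\min_{y\in\mathbb{R}^n}\ \tfrac12\|y-\hat y\|^2\quad\text{s.t.}\quad\mathrm{rank}(\mathcal{H}_2(y))\le1.$$ Then $\mathrm{rank}(\mathcal{H}_2(y^* ))=1$.
   Context: For $x\in\mathbb{R}^n$, $\mathcal{H}_2(x)\in\mathbb{R}^{2\times(n-1)}$ is the Hankel matrix with $(i,j)$ entry $x(i+j-1)$, i.e. first row $(x(1),\dots,x(n-1))$ and second row $(x(2),\dots,x(n))$. *)

From mathcomp Require Import all_boot all_order all_algebra.
From mathcomp Require Import reals.
Set Implicit Arguments. Unset Strict Implicit. Unset Printing Implicit Defensive.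
Import Order.TTheory GRing.Theory Num.Theory.
Local Open Scope ring_scope.

(* Hankel matrix H_2(x) in R^{2 x (n-1)}: entry (i,j) (0-based) is x(i+j),
   i.e. first row x(1..n-1), second row x(2..n) in 1-based indexing.
   Index i+j is always < n for i < 2, j < n-1 when n >= 1, so the
   fallback 0 is never used in that case. *)
Definition hankel2 (R : nzRingType) (n : nat) (x : 'rV[R]_n) : 'M[R]_(2, n.-1) :=
  \matrix_(i < 2, j < n.-1)
    (if @insub nat (fun k => (k < n)%N) 'I_n (i + j)%N is Some k then x 0 k else 0).

Definition hobj (R : realType) (n : nat) (yhat y : 'rV[R]_n) : R :=
  (1 / 2) * \sum_(k < n) (y 0 k - yhat 0 k) ^+ 2.

Definition hankel_rank1_optimal (R : realType) (n : nat) (yhat ystar : 'rV[R]_n) : Prop :=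
  (\rank (hankel2 ystar) <= 1)%N /\
  forall y : 'rV[R]_n, (\rank (hankel2 y) <= 1)%N -> hobj yhat ystar <= hobj yhat y.

(** If the optimal [ystar] had rank-0 Hankel matrix it would be [0], at
    distance [||yhat||] from [yhat].  Geometric sequences [c r^k] have Hankel
    rank at most 1, and since [yhat <> 0] the polynomial [sum_k yhat_k X^k]
    has a non-root [r]; then [yhat] is not orthogonal to [(r^k)_k], so
    projecting [yhat] onto that line gets strictly closer than [0]. *)

From mathcomp Require Import all_boot all_order all_algebra.
From mathcomp Require Import reals.
From mathcomp Require Import ring lra zify.
Set Implicit Arguments. Unset Strict Implicit. Unset Printing Implicit Defensive.
Import Order.TTheory GRing.Theory Num.Theory.
Local Open Scope ring_scope.

Lemma hankel2_index_lt n (i : 'I_2) (j : 'I_n.-1) : (i + j < n)%N.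
Proof. by have := ltn_ord i; have := ltn_ord j; lia. Qed.

Lemma hankel2E (R : nzRingType) n (x : 'rV[R]_n) i j :
  hankel2 x i j = x 0 (Ordinal (hankel2_index_lt i j)).
Proof.
rewrite mxE (insubT (fun k => (k < n)%N) (hankel2_index_lt i j)) /=.
by congr (x 0 _); apply: val_inj.
Qed.

Lemma hankel2Z (R : nzRingType) n (a : R) (x : 'rV[R]_n) :
  hankel2 (a *: x) = a *: hankel2 x.
Proof. by apply/matrixP => i j; rewrite hankel2E [RHS]mxE hankel2E mxE. Qed.

Lemma hankel2_eq0 (R : nzRingType) n (x : 'rV[R]_n) :
  (1 < n)%N -> (hankel2 x == 0) = (x == 0).
Proof.
move=> n_gt1; apply/eqP/eqP => [hx0|->]; last first.
  by apply/matrixP => i j; rewrite hankel2E !mxE.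
apply/rowP => k; rewrite mxE.
have [k_lt|k_ge] := ltnP k n.-1.
  have := hankel2E x 0 (Ordinal k_lt); rewrite hx0 mxE => ->.
  by congr (x 0 _); apply: val_inj.
have last_lt : (n.-2 < n.-1)%N by lia.
have := hankel2E x 1 (Ordinal last_lt); rewrite hx0 mxE => ->.
by congr (x 0 _); apply: val_inj => /=; have := ltn_ord k; lia.
Qed.

Lemma rank_hankel2_powers (R : fieldType) n (r : R) :
  (\rank (hankel2 (\row_(k < n) r ^+ k)) <= 1)%N.
Proof.
have -> : hankel2 (\row_(k < n) r ^+ k) =
    (\col_(i < 2) r ^+ i) *m (\row_(j < n.-1) r ^+ j).
  by apply/matrixP => i j; rewrite hankel2E !mxE big_ord1 !mxE exprD.
exact: leq_trans (mxrankM_maxl _ _) (rank_leq_col _).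
Qed.

Lemma poly_exists_nonroot (R : numDomainType) (p : {poly R}) :
  p != 0 -> exists x, ~~ root p x.
Proof.
move=> p_neq0; set rs := [seq i%:R : R | i <- iota 0 (size p)].
have [all_roots|] := boolP (all (root p) rs); last by case/allPn => x _; exists x.
have rs_uniq : uniq rs.
  by rewrite map_inj_uniq ?iota_uniq // => i j /eqP; rewrite eqr_nat => /eqP.
by have := max_poly_roots p_neq0 all_roots rs_uniq; rewrite size_map size_iota ltnn.
Qed.

Lemma exists_power_sum_neq0 (R : numDomainType) n (a : 'rV[R]_n) :
  a != 0 -> exists r, \sum_(k < n) a 0 k * r ^+ k != 0.
Proof.
move=> a_neq0.
have [|r r_nonroot] := @poly_exists_nonroot _ (rVpoly a).
  by apply: contraNneq a_neq0 => a0; rewrite -[a]rVpolyK a0 linear0.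
exists r; move: r_nonroot; rewrite /root (horner_coef_wide _ (size_poly _ _)).
by under eq_bigr do rewrite coef_rVpoly_ord.
Qed.

Lemma hobj_scale_lt (R : realType) n (yhat v : 'rV[R]_n) :
  \sum_(k < n) yhat 0 k * v 0 k != 0 -> exists c, hobj yhat (c *: v) < hobj yhat 0.
Proof.
set P := \sum_(k < n) _ => P_neq0.
pose Q := \sum_(k < n) v 0 k ^+ 2.
pose S := \sum_(k < n) yhat 0 k ^+ 2.
have Q_gt0 : 0 < Q.
  rewrite lt_def sumr_ge0 ?andbT => [|k _]; last exact: sqr_ge0.
  apply: contraNneq P_neq0 => /psumr_eq0P v0; rewrite /P big1 // => k _.
  by have /eqP := v0 (fun k _ => sqr_ge0 _) k isT; rewrite sqrf_eq0 => /eqP ->; rewrite mulr0.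
have hobjZ c : hobj yhat (c *: v) = 1 / 2 * (c ^+ 2 * Q - 2 * c * P + S).
  rewrite /hobj; congr (_ * _); rewrite /Q /P /S !mulr_sumr -sumrN -!big_split /=.
  by apply: eq_bigr => k _; rewrite !mxE; ring.
have hobj0 : hobj yhat 0 = 1 / 2 * S.
  by rewrite /hobj; congr (_ * _); apply: eq_bigr => k _; rewrite mxE sub0r sqrrN.
exists (P / Q); rewrite hobjZ hobj0.
(* at the projection coefficient [c = P / Q] the objective drops by [P^2 / (2 Q)] *)
have -> : (P / Q) ^+ 2 * Q - 2 * (P / Q) * P = - (P ^+ 2 / Q).
  by field; rewrite gt_eqF.
have : 0 < P ^+ 2 / Q by rewrite divr_gt0 // lt_def sqr_ge0 sqrf_eq0 P_neq0.
lra.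
Qed.

Theorem proposition4p7 (R : realType) (n : nat) (yhat ystar : 'rV[R]_n) :
  (0 < n)%N ->
  \rank (hankel2 yhat) = 2%N ->
  hankel_rank1_optimal yhat ystar ->
  \rank (hankel2 ystar) = 1%N.
Proof.
move=> _ rank_yhat [rank_ystar ystar_opt].
have n_gt1 : (1 < n)%N.
  by have := rank_leq_col (hankel2 yhat); rewrite rank_yhat; lia.
apply/eqP; rewrite eqn_leq rank_ystar lt0n mxrank_eq0 hankel2_eq0 //.
apply/negP => /eqP ystar0.
have yhat_neq0 : yhat != 0 by rewrite -(hankel2_eq0 _ n_gt1) -mxrank_eq0 rank_yhat.
have [r r_nonorth] := exists_power_sum_neq0 yhat_neq0.
have [c closer] : exists c, hobj yhat (c *: \row_(k < n) r ^+ k) < hobj yhat 0.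
  by apply: hobj_scale_lt; under eq_bigr do rewrite mxE.
have rank_le1 : (\rank (hankel2 (c *: \row_(k < n) r ^+ k)) <= 1)%N.
  by rewrite hankel2Z; apply: leq_trans (mxrank_scale _ _) (rank_hankel2_powers _ _).
by have := ystar_opt _ rank_le1; rewrite ystar0 leNgt closer.
Qed.
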